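(* Let $\mathfrak{X}=(X,\{R_i\}_{i=0}^{d+1})$ be a commutative association scheme with $d\ge 2$, $R_d^\top=R_{d+1}$ and $R_i^\top=R_i$ for $0\le i\le d-1$, whose symmetrization $\tilde{\mathfrak X}=(X,\{\tilde R_i\}_{i=0}^d)$ ($\tilde R_i=R_i$ for $i\le d-1$, $\tilde R_d=R_d\cup R_{d+1}$) is amorphic, with character table of the form: for primitive idempotents $\tilde E_0,\dots,\tilde E_d$ and $\tilde A_i$ the adjacency matrix of $\tilde R_i$ with valency $k_i$, $\tilde A_i\tilde E_0=k_i\tilde E_0$, $\tilde A_i\tilde E_i=b_i\tilde E_i$, $\tilde A_i\tilde E_j=a_i\tilde E_j$ for $1\le j\le d$, $j\ne i$, where $a_i\neq b_i$. Let $\Lambda$ be a nonempty subset of $\{1,2,\ldots,d+1\}$ and $R_\Lambda=\bigcup_{\alpha\in\Lambda}R_\alpha$. If the digraph $(X,R_{\Lambda})$ has $d+2$ distinct eigenvalues, then exactly one element of $\{d,d+1\}$ belongs to $\Lambda$.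
   Context: Association scheme: finite set $X$ with a partition of $X\times X$ into relations $R_0$ (diagonal), $R_1,\dots$, closed under transposition, with constant intersection numbers; commutative if these are symmetric in the lower indices. Adjacency matrices are the $01$-matrices of the relations; primitive idempotents $E_0=J/|X|,\dots$ of the Bose–Mesner algebra satisfy $A_iE_j\in\mathbb C E_j$. A symmetric scheme is amorphic if merging the nondiagonal relations along any partition of their index set into nonempty parts gives an association scheme. Eigenvalues of a digraph $(X,R)$ are those of its $01$ adjacency matrix. *)

From HB Require Import structures.
From mathcomp Require Import all_boot all_order all_algebra all_field.
Set Implicit Arguments. Unset Strict Implicit. Unset Printing Implicit Defensive.
Import Order.TTheory GRing.Theory Num.Theory.
Local Open Scope ring_scope.

(* The point set X is represented by 'I_n; a scheme with classes R_0..R_{m-1}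
   is represented by its class function c : 'I_n -> 'I_n -> 'I_m,
   with (x,y) \in R_i  <->  c x y = i. *)

Definition pcount n m (c : 'I_n -> 'I_n -> 'I_m) (i j : 'I_m) (x y : 'I_n) : nat :=
  #|[set z | (c x z == i) && (c z y == j)]|.

Definition is_scheme n m (c : 'I_n -> 'I_n -> 'I_m) : Prop :=
  (forall x y, (nat_of_ord (c x y) == 0%N) = (x == y)) /\
  (forall i : 'I_m, exists x y, c x y = i) /\
  (forall i : 'I_m, exists j : 'I_m, forall x y, (c x y == i) = (c y x == j)) /\
  (forall i j k : 'I_m, forall x y x' y', c x y = k -> c x' y' = k ->
     pcount c i j x y = pcount c i j x' y').

Definition is_commutative_scheme n m (c : 'I_n -> 'I_n -> 'I_m) : Prop :=
  is_scheme c /\ forall (i j : 'I_m) x y, pcount c i j x y = pcount c j i x y.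

Definition is_symmetric_scheme n m (c : 'I_n -> 'I_n -> 'I_m) : Prop :=
  is_scheme c /\ forall x y, c x y = c y x.

(* Amorphic: merging the nondiagonal classes along any partition of their
   index set into nonempty parts (encoded by a surjective labelling
   p : 'I_m -> 'I_k with p i = 0 iff i = 0) yields a scheme. *)
Definition is_amorphic n m (c : 'I_n -> 'I_n -> 'I_m) : Prop :=
  is_symmetric_scheme c /\
  forall (k : nat) (p : 'I_m -> 'I_k),
    (forall i, (nat_of_ord (p i) == 0%N) = (nat_of_ord i == 0%N)) ->
    (forall l : 'I_k, exists i, p i = l) ->
    is_scheme (fun x y => p (c x y)).

Definition adjmx n (S : 'I_n -> 'I_n -> bool) : 'M[algC]_n :=
  \matrix_(x, y) (S x y)%:R.

Definition num_distinct_eigenvalues n (A : 'M[algC]_n) (k : nat) : Prop :=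
  exists s : seq algC, [/\ uniq s, size s = k & forall a, eigenvalue A a = (a \in s)].

Definition symmetrize n d (c : 'I_n -> 'I_n -> 'I_d.+2) (x y : 'I_n) : 'I_d.+1 :=
  inord (minn (c x y) d).

Definition prim_idempotents n m (c : 'I_n -> 'I_n -> 'I_m) (E : 'I_m -> 'M[algC]_n) : Prop :=
  (forall j, exists coef : 'I_m -> algC,
      E j = \sum_(i < m) coef i *: adjmx (fun x y => c x y == i)) /\
  (forall j l, E j *m E l = if j == l then E j else 0) /\
  (forall j, E j != 0) /\
  (\sum_(j < m) E j = 1%:M) /\
  (forall j : 'I_m, nat_of_ord j = 0%N -> E j = (n%:R)^-1 *: const_mx 1).

From HB Require Import structures.
From mathcomp Require Import all_boot all_order all_algebra all_field.
Import Order.TTheory GRing.Theory Num.Theory.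
Local Open Scope ring_scope.

(* If Lambda contains both or neither of d and d+1, then R_Lambda is a union of
   classes of the symmetrization, so its adjacency matrix acts as a scalar on
   each of the d+1 primitive idempotents of the symmetrized scheme.  As these
   idempotents sum to the identity, every eigenvalue is one of those d+1
   scalars, contradicting the assumption of d+2 distinct eigenvalues. *)

Section CommonEigenspaces.

Context {F : fieldType} {n m : nat}.

Lemma eigenvalue_mem_codom {A : 'M[F]_n} {E : 'I_m -> 'M[F]_n} {th : 'I_m -> F} :
    \sum_j E j = 1%:M -> (forall j, A *m E j = th j *: E j) ->
  forall z, eigenvalue A z -> z \in codom th.
Proof.
move=> sumE AE z /eigenvalueP [v vA v_neq0].
have [j vEj_neq0] : exists j, v *m E j != 0.
  apply/existsP; apply: contraR v_neq0 => /existsPn vE0.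
  rewrite -[v]mulmx1 -sumE mulmx_sumr big1 // => j _.
  by apply/eqP; rewrite -[_ == 0]negbK vE0.
have : z *: (v *m E j) = th j *: (v *m E j).
  by rewrite scalemxAl -vA -mulmxA AE -scalemxAr.
move/eqP; rewrite -subr_eq0 -scalerBl scaler_eq0 (negbTE vEj_neq0) orbF subr_eq0.
by move/eqP->; apply: codom_f.
Qed.

Lemma sum_scalar_action (I : finType) (P : pred I) (A : I -> 'M[F]_n) (E : 'M[F]_n) :
    (forall i, P i -> exists l, A i *m E = l *: E) ->
  exists l, (\sum_(i | P i) A i) *m E = l *: E.
Proof.
move=> AE; apply: (big_ind (fun M => exists l, M *m E = l *: E)) => //.
- by exists 0; rewrite mul0mx scale0r.
- by move=> M N [k ME] [l NE]; exists (k + l); rewrite mulmxDl ME NE scalerDl.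
Qed.

Lemma character_table_row_scalar {A : 'M[F]_n} {E : 'I_m.+1 -> 'M[F]_n}
    {k : 'I_n -> F} {i : 'I_m.+1} {ai bi : F} :
    (forall x, A *m E ord0 = k x *: E ord0) -> A *m E i = bi *: E i ->
    (forall j : 'I_m.+1, (0 < j)%N -> j != i -> A *m E j = ai *: E j) ->
  forall j, exists l, A *m E j = l *: E j.
Proof.
move=> AE0 AEi AEj j; case: (posnP j) => [j0 | j_gt0].
  have -> : j = ord0 by apply: val_inj.
  have [x _ | no_point] := pickP (fun _ : 'I_n => true); first by exists (k x).
  by exists 0; apply/matrixP => x; have := no_point x.
by case: (eqVneq j i) => [-> | j_neq_i]; [exists bi | exists ai; apply: AEj].
Qed.

End CommonEigenspaces.

Lemma num_distinct_eigenvalues_le {n m k}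
    {A : 'M[algC]_n} {E : 'I_m -> 'M[algC]_n} {th : 'I_m -> algC} :
    \sum_j E j = 1%:M -> (forall j, A *m E j = th j *: E j) ->
  num_distinct_eigenvalues A k -> (k <= m)%N.
Proof.
move=> sumE AE [s [uniq_s <- eig_s]].
rewrite -[m]card_ord -(size_codom th); apply: uniq_leq_size => // z.
by rewrite -eig_s; apply: eigenvalue_mem_codom sumE AE z.
Qed.

Lemma adjmx_sum_classes {n m}
    (f : 'I_n -> 'I_n -> 'I_m) (S : 'I_n -> 'I_n -> bool) (P : pred 'I_m) :
    (forall x y, S x y = P (f x y)) ->
  adjmx S = \sum_(i | P i) adjmx (fun x y => f x y == i).
Proof.
move=> SP; apply/matrixP => x y; rewrite summxE !mxE SP.
case: (boolP (P _)) => Pf.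
  rewrite (bigD1 (f x y)) //= mxE eqxx big1 ?addr0 // => i /andP [_ i_neq].
  by rewrite mxE eq_sym (negbTE i_neq).
by rewrite big1 // => i Pi; rewrite mxE; case: eqP => // fi; rewrite fi Pi in Pf.
Qed.

Lemma val_symmetrize {n d} (c : 'I_n -> 'I_n -> 'I_d.+2) x y :
  val (symmetrize c x y) = minn (c x y) d.
Proof. by rewrite /symmetrize /= inordK // ltnS geq_minr. Qed.

Lemma mem_symmetrize {n d}
    (c : 'I_n -> 'I_n -> 'I_d.+2) (L : {set 'I_d.+2}) x y :
    (inord d \in L) = (inord d.+1 \in L) ->
  (c x y \in L) = (widen_ord (leqnSn _) (symmetrize c x y) \in L).
Proof.
move=> same_top; set s := widen_ord _ _.
case: (ltnP (c x y) d) => [cxy_lt | cxy_ge].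
  by congr (_ \in L); apply: val_inj;
    rewrite /= val_symmetrize (minn_idPl (ltnW cxy_lt)).
have -> : s = inord d.
  by apply: val_inj; rewrite /= val_symmetrize (minn_idPr cxy_ge) inordK.
have : (c x y <= d.+1)%N by rewrite -ltnS.
rewrite leq_eqVlt ltnS => /orP [/eqP cxy_top | cxy_le].
  by rewrite same_top; congr (_ \in L); apply: val_inj; rewrite /= inordK.
congr (_ \in L); apply: val_inj; rewrite /= inordK //.
by apply/eqP; rewrite eqn_leq cxy_le.
Qed.

Theorem lemma3p3 (n d : nat) (c : 'I_n -> 'I_n -> 'I_d.+2)
  (E : 'I_d.+1 -> 'M[algC]_n) (a b : 'I_d.+1 -> algC) (L : {set 'I_d.+2}) :
  (2 <= d)%N ->
  is_commutative_scheme c ->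
  (forall x y, (c x y == inord d) = (c y x == inord d.+1)) ->
  (forall x y, (c x y < d)%N -> c y x = c x y) ->
  is_amorphic (symmetrize c) ->
  prim_idempotents (symmetrize c) E ->
  (forall i : 'I_d.+1, (0 < i)%N ->
     [/\ forall x : 'I_n,
           adjmx (fun u v => symmetrize c u v == i) *m E ord0
           = #|[set y | symmetrize c x y == i]|%:R *: E ord0,
         adjmx (fun u v => symmetrize c u v == i) *m E i = b i *: E i,
         (forall j : 'I_d.+1, (0 < j)%N -> j != i ->
            adjmx (fun u v => symmetrize c u v == i) *m E j = a i *: E j)
       & a i != b i]) ->
  L != set0 -> ord0 \notin L ->
  num_distinct_eigenvalues (adjmx (fun x y => c x y \in L)) d.+2 ->
  (inord d \in L) != (inord d.+1 \in L).
Proof.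
move=> _ _ _ _ _ [_ [_ [_ [sumE _]]]] table _ ord0_notin_L eigL.
apply/negP => /eqP same_top.
pose P (i : 'I_d.+1) := widen_ord (leqnSn _) i \in L.
have P_gt0 i : P i -> (0 < i)%N.
  rewrite lt0n; apply: contraTN => /eqP i0.
  by rewrite /P (_ : widen_ord _ i = ord0) //; apply: val_inj.
have AL := adjmx_sum_classes (symmetrize c) _ P
  (fun x y => mem_symmetrize c L x y same_top).
have scalar j : exists l, adjmx (fun x y => c x y \in L) *m E j = l *: E j.
  rewrite AL; apply: sum_scalar_action => i /P_gt0 i_gt0.
  have [A0 Ai Aj _] := table i i_gt0.
  exact: character_table_row_scalar A0 Ai Aj j.
have [th ALE] := fin_all_exists scalar.
by have := num_distinct_eigenvalues_le sumE ALE eigL; rewrite ltnn.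
Qed.
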